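(* Let $F>1$ and $s>0$ be constants. Consider the self-adjusting $(1,\lambda)$ EA (defined in the context) with update strength $F$ and success rate $s$, using either standard bit mutation with mutation probability $p\in O(1/n)\cap n^{-O(1)}$ or the heavy-tailed mutation operator with a constant $\beta>1$, on an everywhere hard function $f$ with constant $\varepsilon$ and $d+1=n^{o(\log n)}$ function values. Let $\gamma>1$ be a constant such that $p_x^-\le\gamma^{-1}$ for all non-optimal $x$, and define \[\lambda_1:=4\max\left(\log_\gamma(2d(s+1)),\,\log_\gamma(n\log n)\right),\qquad \lambda_2:=n^{\varepsilon/2}.\] Consider the algorithm at some time $t^*$ with $\lambda_{t^*}\ge\lambda_2$. Then the probability that within the next $n^{o(\log n)}$ generations the offspring population size drops below $\lambda_1$ is at most $n^{-\Omega(\log n)}$.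
   Context: Search space $\{0,1\}^n$; asymptotics with respect to $n\to\infty$. W.l.o.g. $f$ takes values in $\{0,\dots,d\}$ with global optima at value $d$. Self-adjusting $(1,\lambda)$ EA: maintains a search point $x$ and real-valued $\lambda$ (rounded to a nearest integer when needed); $\lambda_t$ is the value in generation $t$. Each generation creates $\lambda$ offspring independently by mutating $x$, picks an offspring $y$ of maximum fitness (ties uniformly at random), sets $x\leftarrow y$ in any case, and sets $\lambda\leftarrow\max\{1,\lambda/F\}$ if $f(y)>f(x)$ and $\lambda\leftarrow F^{1/s}\lambda$ otherwise. Standard bit mutation with probability $p$ flips each bit independently with probability $p$. Heavy-tailed mutation with $\beta>1$ draws $\chi\in\{1,\dots,n/2\}$ with $\Pr[\chi=i]=i^{-\beta}/\sum_{j=1}^{n/2}j^{-\beta}$ and then does standard bit mutation with probability $\chi/n$. For these operators such a constant $\gamma>1$ exists. $p_x^+$ (resp. $p_x^-$) is the probability that a single offspring of $x$ has strictly larger (resp. smaller) fitness than $x$; $p_{\max}:=\max\{p_x^+ : f(x)<d\}$. $f$ is everywhere hard with constant $\varepsilon\in(0,1)$ if $p_{\max}=O(n^{-\varepsilon})$. *)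

From HB Require Import structures.
From mathcomp Require Import all_boot all_order all_algebra.
From mathcomp Require Import reals exp.
Set Implicit Arguments. Unset Strict Implicit. Unset Printing Implicit Defensive.
Import Order.TTheory GRing.Theory Num.Theory.
Local Open Scope ring_scope.

Section EA.
Variable R : realType.

Definition bits (n : nat) := {ffun 'I_n -> bool}.

Definition hamming n (x y : bits n) : nat := #|[set i | x i != y i]|.

(* mutation operator: mut x y = probability that mutating x yields y *)
Definition mutop := forall n, bits n -> bits n -> R.

Definition std_mut (p : nat -> R) : mutop := fun n x y =>
  p n ^+ hamming x y * (1 - p n) ^+ (n - hamming x y).

(* heavy-tailed mutation with parameter beta: chi in {1,..,n/2} with
   Pr[chi = i] = i^-beta / sum_j j^-beta, then standard bit mutation with chi/n *)
Definition heavy_mut (beta : R) : mutop := fun n x y =>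
  let C := \sum_(1 <= j < (n %/ 2).+1) (j%:R : R) `^ (- beta) in
  \sum_(1 <= i < (n %/ 2).+1)
    ((i%:R : R) `^ (- beta) / C) *
    ((i%:R / n%:R) ^+ hamming x y * (1 - i%:R / n%:R) ^+ (n - hamming x y)).

Definition p_plus n (mut : mutop) (f : bits n -> nat) (x : bits n) : R :=
  \sum_(y : bits n | (f x < f y)%N) mut n x y.
Definition p_minus n (mut : mutop) (f : bits n -> nat) (x : bits n) : R :=
  \sum_(y : bits n | (f y < f x)%N) mut n x y.

Definition nround (lam : R) : nat := `|Num.floor (lam + 2^-1)|%N.

(* probability that the offspring selected in one generation of the
   (1,lambda) EA from parent x with k offspring equals y: the k offspring
   Y 0, ..., Y (k-1) are independent mutants of x; an offspring of maximal
   fitness is chosen, ties broken uniformly at random *)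
Definition select_prob n (mut : mutop) (f : bits n -> nat) (x : bits n)
    (k : nat) (y : bits n) : R :=
  \sum_(Y : {ffun 'I_k -> bits n})
    (\prod_(i < k) mut n x (Y i)) *
    (let m := (\max_(i < k) f (Y i))%N in
     if f y == m then
       (#|[set i | Y i == y]|%:R / #|[set i | f (Y i) == m]|%:R)
     else 0).

Definition lam_update (F s : R) (improved : bool) (lam : R) : R :=
  if improved then Num.max 1 (lam / F) else F `^ (s^-1) * lam.

(* probability that, starting from parent x and current population size lam,
   within the next T generations the offspring population size drops below L *)
Fixpoint drop_prob n (mut : mutop) (f : bits n -> nat) (F s L : R)
    (T : nat) (x : bits n) (lam : R) : R :=
  match T with
  | 0 => 0
  | T'.+1 =>
      \sum_(y : bits n)
        select_prob mut f x (nround lam) y *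
        (let lam' := lam_update F s (f x < f y)%N lam in
         if lam' < L then 1 else drop_prob mut f F s L T' y lam')
  end.

Definition logb (b x : R) : R := ln x / ln b.

(* g(n) = n^{o(log n)} (with natural log): for every delta > 0,
   eventually g n <= n^(delta * ln n) *)
Definition quasi_small (g : nat -> nat) : Prop :=
  forall delta : R, 0 < delta -> exists N : nat, forall n : nat, (N <= n)%N ->
    (g n)%:R <= (n%:R : R) `^ (delta * ln (n%:R : R)).

End EA.

(* Let l = ln n, L = max(lambda1, 1) and choose a = Theta(l) with F^a = n^(eps/8).
   The potential h(lam) = (L / lam)^a is at least 1 once lam < lambda1, while
   initially h <= n^(-Omega(l)), because lambda1 = O(l^2) and lam >= n^(eps/2).
   As long as lam <= n^(3 eps/4), a generation improves the fitness with
   probability at most (lam + 1/2) p+ = O(n^(-eps/4)), so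
   Pr[success] F^a + F^(-a/s) <= 1/2 + 1/2 and h does not grow in expectation.
   For larger lam, h stays n^(-Omega(l)) even after a success. Hence the
   probability of falling below lambda1 within T generations is at most
   h(lam_0) + T n^(-Omega(l)), which is n^(-Omega(l)) for T = n^(o(l)). *)

From mathcomp Require Import all_boot all_order all_algebra.
From mathcomp Require Import reals sequences exp.
From mathcomp Require Import ring lra.
Import Order.TTheory GRing.Theory Num.Theory.
Local Open Scope ring_scope.

Section Mutation.
Context {R : realType}.

Definition subprob {T : finType} (g : T -> R) :=
  (forall t, 0 <= g t) /\ \sum_t g t <= 1.

Lemma std_mut_prod {n} (q : R) (x y : bits n) :
  q ^+ hamming x y * (1 - q) ^+ (n - hamming x y) =
  \prod_(j < n) (if x j != y j then q else 1 - q).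
Proof.
rewrite (bigID (fun j => x j != y j)) /=.
rewrite (eq_bigr (fun=> q)); last by move=> j ->.
rewrite [X in _ = _ * X](eq_bigr (fun=> 1 - q)); last by move=> j /negbTE ->.
rewrite !prodr_const.
have -> : hamming x y = #|[pred j | x j != y j]| by rewrite /hamming cardsE.
congr (_ * _ ^+ _).
have := cardC [pred j : 'I_n | x j != y j]; rewrite card_ord => hC.
by rewrite -[X in (X - _)%N]hC addKn; apply: eq_card.
Qed.

Lemma sum_std_mut {n} (q : R) (x : bits n) :
  \sum_(y : bits n) q ^+ hamming x y * (1 - q) ^+ (n - hamming x y) = 1.
Proof.
under eq_bigr do rewrite std_mut_prod.
rewrite -(bigA_distr_bigA (fun j b => if x j != b then q else 1 - q)) /=.
rewrite big1 // => j _; rewrite big_bool.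
by case: (x j); rewrite /= ?subrK // addrC subrK.
Qed.

Lemma std_mut_subprob (p : nat -> R) {n} (x : bits n) :
  0 <= p n <= 1 -> subprob (std_mut p x).
Proof.
case/andP=> p0 p1; split=> [y|]; last by rewrite sum_std_mut.
by rewrite mulr_ge0 // exprn_ge0 // subr_ge0.
Qed.

Lemma heavy_mut_subprob (beta : R) {n} (x : bits n) :
  subprob (heavy_mut beta x).
Proof.
rewrite /heavy_mut; set C := \sum_(1 <= j < _) _; split=> [y|].
  rewrite big_nat_cond; apply: sumr_ge0 => i /andP[/andP[_ hi] _].
  have C0 : 0 <= C by apply: sumr_ge0 => j _; rewrite powR_ge0.
  have hq : 0 <= (i%:R / n%:R : R) <= 1.
    have hin : (i <= n)%N by apply: leq_trans (leq_div n 2); rewrite -ltnS.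
    rewrite divr_ge0 //=; have [->|n0] := posnP n; first by rewrite invr0 mulr0.
    by rewrite ler_pdivrMr ?ltr0n // mul1r ler_nat.
  have [mut0 _] := @std_mut_subprob (fun=> i%:R / n%:R) n x hq.
  by rewrite mulr_ge0 ?divr_ge0 ?powR_ge0 //; apply: mut0.
rewrite exchange_big /=.
under eq_bigr do rewrite -mulr_sumr sum_std_mut mulr1.
rewrite -mulr_suml -/C; have [->|C0] := eqVneq C 0; first by rewrite mul0r.
by rewrite mulfV.
Qed.

End Mutation.

Section Selection.
Context {R : realType} {T : finType} (f : T -> nat).

Definition pick_weight {k} (Y : {ffun 'I_k -> T}) (y : T) : R :=
  let m := (\max_(i < k) f (Y i))%N in
  if f y == m then #|[set i | Y i == y]|%:R / #|[set i | f (Y i) == m]|%:R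
  else 0.

Lemma pick_weight_ge0 {k} (Y : {ffun 'I_k -> T}) y : 0 <= pick_weight Y y.
Proof. by rewrite /pick_weight; case: ifP => // _; rewrite divr_ge0. Qed.

Lemma sum_pick_weight_le1 {k} (Y : {ffun 'I_k -> T}) : \sum_y pick_weight Y y <= 1.
Proof.
set m := (\max_(i < k) f (Y i))%N; set ties := #|[set i | f (Y i) == m]|.
have cardE (P : pred 'I_k) : #|[set i | P i]| = (\sum_i P i)%N.
  rewrite cardsE -sum1_card big_mkcond /=.
  by apply: eq_bigr => i _; rewrite unfold_in; case: (P i).
have sum_ties : (\sum_y (f y == m) * #|[set i | Y i == y]| = ties)%N.
  under eq_bigr => y _ do rewrite (cardE (fun i => Y i == y)) big_distrr /=.
  rewrite exchange_big /= /ties (cardE (fun i => f (Y i) == m)); apply: eq_bigr => i _.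
  rewrite (bigD1 (Y i)) //= eqxx muln1 big1 ?addn0 // => y /negbTE.
  by rewrite eq_sym => ->; rewrite muln0.
rewrite (eq_bigr (fun y => ((f y == m) * #|[set i | Y i == y]|)%N%:R / ties%:R));
  last by move=> y _; rewrite /pick_weight -/m -/ties; case: (f y == m); rewrite ?mul1n ?mul0r.
rewrite -mulr_suml -natr_sum sum_ties.
by have [->|ties0] := eqVneq (ties%:R : R) 0; rewrite ?invr0 ?mulr0 ?mulfV.
Qed.

Lemma sum_pick_weight_improving {k} (Y : {ffun 'I_k -> T}) (f0 : nat) :
  \sum_(y | (f0 < f y)%N) pick_weight Y y <= \sum_(i < k) ((f0 < f (Y i))%N)%:R.
Proof.
have [/existsP[i Hi]|none] := boolP [exists i, (f0 < f (Y i))%N].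
  apply: (@le_trans _ _ 1).
    apply: le_trans (sum_pick_weight_le1 Y).
    rewrite [X in _ <= X](bigID (fun y => (f0 < f y)%N)) /= lerDl.
    by apply: sumr_ge0 => y _; apply: pick_weight_ge0.
  by rewrite (bigD1 i) //= Hi lerDl sumr_ge0.
rewrite big1 ?sumr_ge0 // => y f0y; rewrite /pick_weight.
have maxf : (\max_(i < k) f (Y i) <= f0)%N.
  by apply/bigmax_leqP => i _; rewrite leqNgt; apply: contra none => ?; apply/existsP; exists i.
by case: eqP => // fy; move: f0y; rewrite fy ltnNge maxf.
Qed.

Section Products.
Context {g : T -> R}.
Hypothesis g_subprob : subprob g.

Lemma sum_prod_le1 k : \sum_(Y : {ffun 'I_k -> T}) \prod_(i < k) g (Y i) <= 1.
Proof.
have [g0 g1] := g_subprob.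
rewrite -(bigA_distr_bigA (fun _ t => g t)) /=.
by apply: prodr_ile1 => i _; rewrite g1 sumr_ge0.
Qed.

Lemma sum_prod_indicator_le {k} (i : 'I_k) (P : pred T) :
  \sum_(Y : {ffun 'I_k -> T}) (\prod_(j < k) g (Y j)) * (P (Y i))%:R
  <= \sum_(t | P t) g t.
Proof.
have [g0 g1] := g_subprob.
pose G j t := g t * (if j == i then (P t)%:R else 1).
rewrite (eq_bigr (fun Y : {ffun 'I_k -> T} => \prod_(j < k) G j (Y j))); last first.
  move=> Y _; rewrite /G big_split /=; congr (_ * _).
  by rewrite (bigD1 i) //= eqxx big1 ?mulr1 // => j /negbTE ->.
rewrite -(bigA_distr_bigA G) (bigD1 i) //=.
have -> : \sum_t G i t = \sum_(t | P t) g t.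
  by rewrite [RHS]big_mkcond; apply: eq_bigr => t _; rewrite /G eqxx; case: (P t); rewrite ?mulr1 ?mulr0.
apply: ler_piMr; first exact: sumr_ge0.
apply: prodr_ile1 => j /negbTE ji; under eq_bigr do rewrite /G ji mulr1.
by rewrite g1 sumr_ge0.
Qed.

End Products.
End Selection.

Section SelectProb.
Context {R : realType} {n : nat} {mut : mutop R} {f : bits n -> nat} {x : bits n}.
Hypothesis mut_subprob : subprob (mut n x).

Lemma select_probE k y :
  select_prob mut f x k y =
  \sum_(Y : {ffun 'I_k -> bits n}) (\prod_(i < k) mut n x (Y i)) * pick_weight f Y y.
Proof. by []. Qed.

Lemma select_prob_ge0 k y : 0 <= select_prob mut f x k y.
Proof.
have [m0 _] := mut_subprob.
by rewrite select_probE sumr_ge0 // => Y _; rewrite mulr_ge0 ?pick_weight_ge0 ?prodr_ge0.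
Qed.

Lemma sum_select_prob_le1 k : \sum_y select_prob mut f x k y <= 1.
Proof.
have [m0 _] := mut_subprob.
under eq_bigr do rewrite select_probE.
rewrite exchange_big /=; apply: le_trans (sum_prod_le1 mut_subprob k).
apply: ler_sum => Y _; rewrite -mulr_sumr.
by apply: ler_piMr; rewrite ?prodr_ge0 ?sum_pick_weight_le1.
Qed.

(* Union bound over the k offspring. *)
Lemma sum_select_prob_improving k :
  \sum_(y | (f x < f y)%N) select_prob mut f x k y <= k%:R * p_plus mut f x.
Proof.
have [m0 _] := mut_subprob.
under eq_bigr do rewrite select_probE.
rewrite exchange_big /=.
apply: (@le_trans _ _ (\sum_(Y : {ffun 'I_k -> bits n}) \sum_(i < k)
    (\prod_(j < k) mut n x (Y j)) * ((f x < f (Y i))%N)%:R)).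
  apply: ler_sum => Y _; rewrite -!mulr_sumr; apply: ler_wpM2l.
    exact: prodr_ge0.
  exact: sum_pick_weight_improving.
rewrite exchange_big /=.
apply: (@le_trans _ _ (\sum_(i < k) p_plus mut f x)).
  by apply: ler_sum => i _; apply: (sum_prod_indicator_le mut_subprob i (fun y => (f x < f y)%N)).
by rewrite sumr_const card_ord mulr_natl.
Qed.

Lemma p_plus_max : (forall y, (f y <= f x)%N) -> p_plus mut f x = 0.
Proof. by move=> fmax; rewrite /p_plus big1 // => y; rewrite ltnNge fmax. Qed.

End SelectProb.

Section Potential.
Context {R : realType}.

Lemma lam_update_ge1 (F s : R) b lam :
  1 < F -> 0 < s -> 1 <= lam -> 1 <= lam_update F s b lam.
Proof.
move=> F1 s0 lam1; rewrite /lam_update; case: b; first by rewrite le_max lexx.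
apply: mulr_ege1 => //; rewrite -[X in X <= _](powRr0 F).
by apply: ler_powR; rewrite ?invr_ge0 ltW.
Qed.

Lemma nround_le (l : R) : 0 <= l -> (nround l)%:R <= l + 2^-1.
Proof.
move=> l0; rewrite /nround natr_absz ger0_norm ?floor_le //.
by rewrite floor_ge0 addr_ge0 // invr_ge0.
Qed.

Lemma drop_prob_le_potential {n} (mut : mutop R) (f : bits n -> nat) (F s L dl : R)
    (h : R -> R) :
  1 < F -> 0 < s -> (forall x : bits n, subprob (mut n x)) ->
  (forall l, 1 <= l -> 0 <= h l) -> (forall l, 1 <= l -> l < L -> 1 <= h l) ->
  0 <= dl ->
  (forall x l, 1 <= l -> \sum_y select_prob mut f x (nround l) y *
      h (lam_update F s (f x < f y)%N l) <= h l + dl) ->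
  forall T x l, 1 <= l -> drop_prob mut f F s L T x l <= h l + T%:R * dl.
Proof.
move=> F1 s0 mutP h0 h1 dl0 drift.
elim=> [|T IH] x l l1 /=; first by rewrite mul0r addr0 h0.
set p := select_prob mut f x (nround l).
apply: (@le_trans _ _ (\sum_y p y * h (lam_update F s (f x < f y)%N l)
                      + \sum_y p y * (T%:R * dl))).
  rewrite -big_split /=; apply: ler_sum => y _; rewrite -mulrDr.
  apply: ler_wpM2l; first exact: select_prob_ge0 (mutP x) _ _.
  have u1 : 1 <= lam_update F s (f x < f y)%N l by exact: lam_update_ge1.
  case: ifP => [below|_]; last exact: IH.
  by apply: le_trans (h1 _ u1 below) _; rewrite lerDl mulr_ge0.
have sum_p : \sum_y p y * (T%:R * dl) <= T%:R * dl.
  by rewrite -mulr_suml ler_piMl ?mulr_ge0 ?(sum_select_prob_le1 (mutP x)).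
apply: le_trans (lerD (drift x l l1) sum_p) _.
by rewrite -natr1 mulrDl mul1r; lra.
Qed.

Definition potential (a L z : R) := expR (a * (ln L - ln z)).

Lemma potential_ge1 (a L z : R) : 0 <= a -> 0 < z -> z <= L -> 1 <= potential a L z.
Proof.
move=> a0 z0 zL; rewrite -expR0 ler_expR mulr_ge0 // subr_ge0.
by rewrite ler_ln ?posrE //; apply: lt_le_trans zL.
Qed.

Lemma potential_max1_div (F a L z : R) : 1 < F -> 0 <= a -> 0 < z ->
  potential a L (Num.max 1 (z / F)) <= potential a L z * expR (a * ln F).
Proof.
move=> F1 a0 z0; have F0 : 0 < F := lt_trans ltr01 F1.
have zF0 : 0 < z / F by rewrite divr_gt0.
rewrite /potential -expRD ler_expR -mulrDr ler_wpM2l //.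
have -> : ln z = ln (z / F) + ln F by rewrite -lnM ?posrE // divfK ?gt_eqF.
rewrite opprD addrA subrK lerB // ler_ln ?posrE ?le_max ?lexx ?orbT //.
by apply: lt_le_trans zF0 _; rewrite le_max lexx orbT.
Qed.

Lemma potential_powR_mul (F s a L z : R) : 0 < F -> 0 < z ->
  potential a L (F `^ s^-1 * z) = potential a L z * expR (- (a * (ln F / s))).
Proof.
move=> F0 z0; rewrite /potential -expRD lnM ?posrE ?powR_gt0 // ln_powR.
by congr expR; rewrite mulrC [s^-1 * _]mulrC; ring.
Qed.

Lemma expected_potential_split {n} (mut : mutop R) (f : bits n -> nat) (F s a L : R)
    (x : bits n) (l : R) :
  let q := \sum_(y | (f x < f y)%N) select_prob mut f x (nround l) y in
  1 < F -> subprob (mut n x) -> 0 <= a -> 0 < l ->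
  \sum_y select_prob mut f x (nround l) y * potential a L (lam_update F s (f x < f y)%N l)
    <= potential a L l * (q * expR (a * ln F) + (1 - q) * expR (- (a * (ln F / s)))).
Proof.
move=> q F1 mutP a0 l0.
set p := select_prob mut f x (nround l); set r := \sum_(y | ~~ (f x < f y)%N) p y.
have p0 y : 0 <= p y := select_prob_ge0 mutP _ y.
have r_le : r <= 1 - q.
  have qr : q + r = \sum_y p y by rewrite [RHS](bigID (fun y => (f x < f y)%N)).
  suff : q + r <= 1 by lra.
  by rewrite qr; apply: sum_select_prob_le1.
set h := potential a L l; set up := expR _; set down := expR _.
have -> : h * (q * up + (1 - q) * down) = q * (h * up) + (1 - q) * (h * down) by ring.
rewrite (bigID (fun y => (f x < f y)%N)) /=; apply: lerD.
  rewrite /q mulr_suml; apply: ler_sum => y improved; rewrite /lam_update improved.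
  by rewrite ler_wpM2l ?potential_max1_div.
apply: le_trans (ler_wpM2r (mulr_ge0 (expR_ge0 _) (expR_ge0 _)) r_le).
rewrite /r mulr_suml; apply: ler_sum => y failed; rewrite /lam_update (negbTE failed).
by rewrite potential_powR_mul // (lt_trans ltr01).
Qed.

Lemma expected_potential_le {n} (mut : mutop R) (f : bits n -> nat) (F s L a th pp : R)
    (x : bits n) (l : R) :
  1 < F -> 0 < s -> subprob (mut n x) -> 0 <= a -> 1 <= l -> p_plus mut f x <= pp ->
  (ln l <= th -> (l + 2^-1) * pp * expR (a * ln F) + expR (- (a * (ln F / s))) <= 1) ->
  \sum_y select_prob mut f x (nround l) y * potential a L (lam_update F s (f x < f y)%N l)
    <= potential a L l + expR (a * (ln L + ln F - th)).
Proof.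
move=> F1 s0 mutP a0 l1 hpp small_step.
have l0 : 0 < l := lt_le_trans ltr01 l1.
apply: le_trans (expected_potential_split mut f F s a L x l F1 mutP a0 l0) _.
set q := \sum_(y | _) _; set h := potential a L l.
set up := expR (a * ln F); set down := expR (- _).
have lnF0 : 0 <= ln F by rewrite ln_ge0 // ltW.
have h0 : 0 <= h := expR_ge0 _.
have up1 : 1 <= up by rewrite -expR0 ler_expR mulr_ge0.
have down1 : down <= 1.
  by rewrite -expR0 ler_expR oppr_le0 mulr_ge0 // divr_ge0 // ltW.
have down0 : 0 <= down := expR_ge0 _.
have q0 : 0 <= q by apply: sumr_ge0 => y _; apply: select_prob_ge0.
have q1 : q <= 1.
  apply: le_trans (sum_select_prob_le1 (f := f) mutP (nround l)).
  rewrite /q [leRHS](bigID (fun y => (f x < f y)%N)) /= lerDl.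
  by apply: sumr_ge0 => y _; apply: select_prob_ge0.
have [below|above] := lerP (ln l) th.
  have q_le : q <= (l + 2^-1) * pp.
    apply: le_trans (sum_select_prob_improving mutP _) _.
    have pplus0 : 0 <= p_plus mut f x by apply: sumr_ge0 => y _; case: mutP.
    by apply: ler_pM => //; apply: nround_le; apply: ltW.
  have : q * up + (1 - q) * down <= 1.
    have := ler_wpM2r (le_trans ler01 up1) q_le; have := mulr_ge0 q0 down0.
    by have := small_step below; rewrite -/up -/down; lra.
  by move/(ler_wpM2l h0); rewrite mulr1 => /le_trans; apply; rewrite lerDl expR_ge0.
have : q * up + (1 - q) * down <= up.
  have : 0 <= (1 - q) * (up - down) by rewrite mulr_ge0 // subr_ge0 // (le_trans down1).
  lra.
move/(ler_wpM2l h0)/le_trans; apply.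
suff : h * up <= expR (a * (ln L + ln F - th)) by lra.
rewrite /h /potential /up -expRD ler_expR -mulrDr ler_wpM2l //.
by rewrite addrAC lerB // ltW.
Qed.

End Potential.

Section Asymptotics.
Context {R : realType}.

Lemma expRN_le_inv (y : R) : 0 < y -> expR (- y) <= y^-1.
Proof.
move=> y0; rewrite expRN lef_pV2 ?posrE ?expR_gt0 //.
by apply: le_trans (expR_ge1Dx y); rewrite lerDr.
Qed.

Lemma expRN_le_half (y : R) : 1 <= y -> expR (- y) <= 2^-1.
Proof.
move=> y1; rewrite expRN lef_pV2 ?posrE ?expR_gt0 //.
by apply: le_trans (expR_ge1Dx y); lra.
Qed.

Lemma expR_double_le (u : R) : 1 <= u -> 2 * expR (- (2 * u)) <= expR (- u).
Proof.
move=> u1; have -> : expR (- u) = expR u * expR (- (2 * u)) by rewrite -expRD; congr expR; lra.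
rewrite ler_pM2r ?expR_gt0 //.
by apply: le_trans (expR_ge1Dx u); lra.
Qed.

Lemma potential_drift_condition (eps l s C z : R) :
  0 < eps -> 0 < s -> 0 <= C -> 1 <= z ->
  32 * C / eps <= l -> 8 * s / eps <= l -> ln z <= 3 * eps * l / 4 ->
  (z + 2^-1) * (C * expR (- (eps * l))) * expR (eps * l / 8)
    + expR (- (eps * l / (8 * s))) <= 1.
Proof.
move=> e0 s0 C0 z1 lC ls lnz.
rewrite ler_pdivrMr // in lC; rewrite ler_pdivrMr // in ls.
have l0 : 0 < l by rewrite -(pmulr_lgt0 _ e0) (lt_le_trans _ ls) ?mulr_gt0.
have y0 : 0 < eps * l / 8 by rewrite divr_gt0 ?mulr_gt0.
have z_le : z + 2^-1 <= 2 * expR (3 * eps * l / 4).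
  have : z <= expR (3 * eps * l / 4) by rewrite -[z]lnK ?posrE ?ler_expR //; lra.
  lra.
have success : (z + 2^-1) * (C * expR (- (eps * l))) * expR (eps * l / 8) <= 2^-1.
  have CA0 : 0 <= C * expR (- (eps * l)) by rewrite mulr_ge0 ?expR_ge0.
  apply: le_trans (ler_wpM2r (expR_ge0 _) (ler_wpM2r CA0 z_le)) _.
  have -> : 2 * expR (3 * eps * l / 4) * (C * expR (- (eps * l))) * expR (eps * l / 8)
      = 2 * C * expR (- (eps * l / 8)).
    have <- : expR (3 * eps * l / 4) * expR (- (eps * l)) * expR (eps * l / 8)
        = expR (- (eps * l / 8)) by rewrite -!expRD; congr expR; lra.
    by ring.
  have : 2 * C * expR (- (eps * l / 8)) <= 2 * C / (eps * l / 8).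
    by apply: ler_wpM2l; [rewrite mulr_ge0 | exact: expRN_le_inv].
  suff : 2 * C / (eps * l / 8) <= 2^-1 by lra.
  by rewrite ler_pdivrMr //; lra.
have failure : expR (- (eps * l / (8 * s))) <= 2^-1.
  by apply: expRN_le_half; rewrite ler_pdivlMr ?mulr_gt0 // mul1r; lra.
lra.
Qed.

(* Unlike [ler_ln], this allows [x = 0], where [ln 0 = 0]. *)
Lemma ln_le_ge1 (x y : R) : 0 <= x -> x <= y -> 1 <= y -> ln x <= ln y.
Proof.
move=> x0 xy y1; have [x1|x1] := lerP x 1; first exact: le_trans (ln_le0 x1) (ln_ge0 y1).
have xpos : 0 < x := lt_trans ltr01 x1.
by rewrite ler_ln ?posrE // (lt_le_trans xpos xy).
Qed.

Lemma lambda1_le_sq (s gamma dd nu l : R) :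
  0 < s -> 1 < gamma -> 1 <= l -> 0 <= dd -> ln (dd + 1) <= l * l -> 0 < nu -> ln nu = l ->
  Num.max (4 * Num.max (logb gamma (2 * dd * (s + 1))) (logb gamma (nu * ln nu))) 1
    <= (1 + 4 * (ln (2 * (s + 1)) + 2) / ln gamma) * (l * l).
Proof.
move=> s0 g1 l1 dd0 hdd nu0 lnnu.
have lg0 : 0 < ln gamma := ln_gt0 g1.
set K0 := ln (2 * (s + 1)); set B := (K0 + 2) * (l * l) / ln gamma.
have K00 : 0 <= K0 by rewrite ln_ge0 //; lra.
have ll1 : 1 <= l * l by rewrite mulr_ege1.
have B0 : 0 <= B by rewrite divr_ge0 ?mulr_ge0 ?ltW //; lra.
have hdd' : logb gamma (2 * dd * (s + 1)) <= B.
  rewrite /logb /B ler_pM2r ?invr_gt0 //.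
  apply: (@le_trans _ _ (ln (2 * (s + 1) * (dd + 1)))); first by apply: ln_le_ge1; nra.
  rewrite lnM ?posrE -/K0; [nra | lra | lra].
have hnu : logb gamma (nu * ln nu) <= B.
  rewrite /logb /B ler_pM2r ?invr_gt0 // lnnu lnM ?posrE ?lnnu //; last lra.
  have := ln_sublinear (lt_le_trans ltr01 l1); nra.
have -> : (1 + 4 * (K0 + 2) / ln gamma) * (l * l) = l * l + 4 * B.
  by rewrite /B; field; rewrite gt_eqF.
have hmax : Num.max (logb gamma (2 * dd * (s + 1))) (logb gamma (nu * ln nu)) <= B.
  by rewrite ge_max hdd' hnu.
by rewrite ge_max; apply/andP; split; lra.
Qed.

Lemma ln_sq_le_linear (K e b : R) : 0 < K -> 0 < e ->
  exists M, forall l, M <= l -> ln (K * (l * l)) <= e * l - b.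
Proof.
move=> K0 e0; set t := e / 4; have t0 : 0 < t by rewrite divr_gt0.
exists (Num.max 1 (2 * (ln K - 2 * ln t + b) / e)) => l.
rewrite ge_max ler_pdivrMr // => /andP[l1 lM]; have l0 : 0 < l by lra.
have tl : t * l = e * l / 4 by rewrite /t mulrAC.
rewrite !lnM ?posrE ?mulr_gt0 //.
have := ln_sublinear (mulr_gt0 t0 l0); rewrite lnM ?posrE //; lra.
Qed.

Lemma ln_lambda1_le {s gamma eps : R} (F : R) : 0 < s -> 1 < gamma -> 0 < eps ->
  exists M, forall dd nu l, M <= l -> 1 <= l -> 0 <= dd -> ln (dd + 1) <= l * l ->
    0 < nu -> ln nu = l ->
    ln (Num.max (4 * Num.max (logb gamma (2 * dd * (s + 1))) (logb gamma (nu * ln nu))) 1)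
      <= eps / 4 * l - ln F.
Proof.
move=> s0 g1 e0; set K := 1 + 4 * (ln (2 * (s + 1)) + 2) / ln gamma.
have K0 : 0 < K.
  have : 0 <= ln (2 * (s + 1)) by rewrite ln_ge0 //; lra.
  by move=> ln0; rewrite (lt_le_trans ltr01) // lerDl divr_ge0 ?ln_ge0 ?ltW //; lra.
have [M HM] := ln_sq_le_linear _ _ (ln F) K0 (divr_gt0 e0 (ltr0n _ 4)).
exists M => dd nu l lM l1 dd0 hdd nu0 lnnu; have l0 : 0 < l := lt_le_trans ltr01 l1.
apply: le_trans (HM _ lM); rewrite ler_ln ?posrE ?mulr_gt0 //; last first.
  by rewrite (lt_le_trans ltr01) // le_max lexx orbT.
exact: lambda1_le_sq.
Qed.

Lemma ln_natr_ge (M : R) : exists N, forall n, (N <= n)%N -> M <= ln (n%:R : R).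
Proof.
exists (Num.truncn (expR M)).+1 => n hn.
have Mn : expR M < n%:R by apply: lt_le_trans (truncnS_gt _) _; rewrite ler_nat.
by rewrite -[M]expRK ler_ln ?posrE ?expR_gt0 ?ltW // (lt_trans (expR_gt0 M)).
Qed.

Lemma powR_expR (a x : R) : 0 < a -> a `^ x = expR (x * ln a).
Proof. by move=> a0; rewrite /powR gt_eqF. Qed.

Definition drop_exponent (eps F : R) := eps ^+ 2 / (64 * ln F).

Lemma drop_exponent_gt0 {eps F : R} : 0 < eps -> 1 < F -> 0 < drop_exponent eps F.
Proof. by move=> e0 F1; rewrite divr_gt0 ?exprn_gt0 ?mulr_gt0 ?ln_gt0. Qed.

Lemma drop_prob_le_expR {n} (mut : mutop R) (f : bits n -> nat) (dn Tn : nat)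
    (F s eps C L l : R) (x0 : bits n) (lam0 : R) :
  let c := drop_exponent eps F in
  1 < F -> 0 < s -> 0 < eps -> 0 <= C -> (forall x : bits n, subprob (mut n x)) ->
  (forall x, (f x <= dn)%N) ->
  (forall x, (f x < dn)%N -> p_plus mut f x <= C * expR (- (eps * l))) ->
  1 <= l -> 1 <= c * l -> 32 * C / eps <= l -> 8 * s / eps <= l ->
  ln (Num.max L 1) <= eps / 4 * l - ln F ->
  Tn%:R <= expR (2 * c * l * l) -> expR (eps / 2 * l) <= lam0 ->
  drop_prob mut f F s L Tn x0 lam0 <= expR (- c * l * l).
Proof.
move=> c F1 s0 e0 C0 mutP fdn hard l1 cl1 lC ls hL hT hlam.
have lnF0 : 0 < ln F := ln_gt0 F1.
set a := eps / (8 * ln F) * l.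
have a0 : 0 <= a by rewrite mulr_ge0 ?divr_ge0 ?mulr_ge0 ?ltW //; lra.
have alnF : a * ln F = eps * l / 8 by rewrite /a; field; rewrite gt_eqF.
have ac : a * (eps * l / 4) = 2 * c * l * l by rewrite /a /c /drop_exponent; field; rewrite gt_eqF.
clearbody c. (* so that rewriting cannot unfold [c] *)
set L' := Num.max L 1; set th := 3 * eps * l / 4.
set dl := expR (a * (ln L' + ln F - th)).
have lam01 : 1 <= lam0.
  have : 0 <= eps / 2 * l by rewrite mulr_ge0 //; lra.
  by have := expR_ge1Dx (eps / 2 * l); lra.
apply: le_trans (drop_prob_le_potential mut f F s L dl (potential a L') F1 s0 mutP _ _
  (expR_ge0 _) _ Tn x0 lam0 lam01) _.
- by move=> z _; apply: expR_ge0.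
- move=> z z1 zL; apply: potential_ge1 => //; first exact: lt_le_trans z1.
  by apply/ltW/(lt_le_trans zL); rewrite le_max lexx.
- move=> x z z1; apply: (expected_potential_le mut f F s L' a th (C * expR (- (eps * l)))) => //.
    have [/hard //|fx] := ltnP (f x) dn.
    by rewrite p_plus_max ?mulr_ge0 ?expR_ge0 // => y; apply: leq_trans (fdn y) fx.
  have -> : a * (ln F / s) = eps * l / (8 * s) by rewrite mulrA alnF; field; rewrite gt_eqF.
  by rewrite alnF; apply: potential_drift_condition.
have hpot : potential a L' lam0 <= expR (- (2 * c * l * l)).
  have : eps / 2 * l <= ln lam0.
    by rewrite -[_ * l]expRK ler_ln ?posrE ?expR_gt0 // (lt_le_trans ltr01).
  rewrite /potential ler_expR -ac => hlnlam; rewrite -mulrN ler_wpM2l //; lra.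
have hdrift : Tn%:R * dl <= expR (- (2 * c * l * l)).
  have : dl <= expR (- (4 * c * l * l)).
    rewrite /dl ler_expR (_ : - (4 * c * l * l) = a * - (eps * l / 2)); last lra.
    by apply: ler_wpM2l => //; rewrite /th; lra.
  move=> hdl; apply: le_trans (ler_pM (ler0n _ _) (expR_ge0 _) hT hdl) _.
  by rewrite -expRD ler_expR; lra.
have cll : 1 <= c * l * l := mulr_ege1 cl1 l1.
have := expR_double_le _ cll; rewrite !mulrA !mulNr; lra.
Qed.

End Asymptotics.

Theorem lemma3p3 (R : realType) (F s eps gamma : R)
  (mut : mutop R) (f : forall n : nat, bits n -> nat) (d : nat -> nat) :
  1 < F -> 0 < s -> 0 < eps < 1 -> 1 < gamma ->
  (* mutation operator: standard bit mutation with p in O(1/n) cap n^-O(1),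
     or heavy-tailed mutation with constant beta > 1 *)
  ((exists p : nat -> R,
      (forall n, 0 <= p n <= 1) /\
      (exists C : R, exists N : nat, forall n : nat, (N <= n)%N -> p n <= C / n%:R) /\
      (exists C : R, exists N : nat, forall n : nat, (N <= n)%N ->
          (n%:R : R) `^ (- C) <= p n) /\
      mut = std_mut p)
   \/ (exists beta : R, 1 < beta /\ mut = @heavy_mut R beta)) ->
  (* f takes values in {0,..,d} with global optima at value d *)
  (forall n (x : bits n), (f n x <= d n)%N) ->
  (forall n, exists x : bits n, f n x = d n) ->
  (* d + 1 = n^{o(log n)} *)
  @quasi_small R (fun n => (d n).+1) ->
  (* f is everywhere hard with constant eps *)
  (exists C : R, exists N : nat, forall n : nat, (N <= n)%N ->
     forall x : bits n, (f n x < d n)%N ->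
       p_plus mut (f n) x <= C * (n%:R : R) `^ (- eps)) ->
  (* p_x^- <= 1/gamma for all non-optimal x *)
  (exists N : nat, forall n : nat, (N <= n)%N ->
     forall x : bits n, (f n x < d n)%N -> p_minus mut (f n) x <= gamma^-1) ->
  let lambda1 := fun n : nat =>
    4 * Num.max (logb gamma (2 * (d n)%:R * (s + 1)))
                (logb gamma (n%:R * ln (n%:R : R))) in
  let lambda2 := fun n : nat => (n%:R : R) `^ (eps / 2) in
  forall T : nat -> nat, @quasi_small R T ->
  exists c : R, 0 < c /\ exists N : nat, forall n : nat, (N <= n)%N ->
    forall (x0 : bits n) (lam0 : R), lambda2 n <= lam0 ->
      drop_prob mut (f n) F s (lambda1 n) (T n) x0 lam0
        <= (n%:R : R) `^ (- c * ln (n%:R : R)).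
Proof.
move=> F1 s0 /andP[e0 _] g1 hmut fd _ hd [C [Nh hard]] _ lambda1 lambda2 T hT.
have mutP n (x : bits n) : subprob (mut n x).
  by case: hmut => [[p [p01 [_ [_ ->]]]] | [beta [_ ->]]];
    [exact: std_mut_subprob | exact: heavy_mut_subprob].
set c := drop_exponent eps F; have c0 : 0 < c := drop_exponent_gt0 e0 F1.
exists c; split => //.
have [M HM] := ln_lambda1_le F s0 g1 e0.
have [Nd HNd] := hd 1 ltr01.
have [NT HNT] := hT (2 * c) (mulr_gt0 (ltr0n _ 2) c0).
have [Nl HNl] := ln_natr_ge
  (Num.max M (Num.max 1 (Num.max c^-1 (Num.max (32 * `|C| / eps) (8 * s / eps))))).
exists (maxn Nl (maxn Nd (maxn NT Nh))) => n.
rewrite !geq_max => /and4P[nl nd nT nh] x0 lam0 hlam0.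
move: (HNl n nl); rewrite !ge_max => /and5P[lM l1 lc lC ls].
have n0 : 0 < (n%:R : R).
  by rewrite ltNge; apply: contraTN l1 => /ln0 ->; rewrite -ltNge ltr01.
move: (HNd n nd) (HNT n nT) hlam0; rewrite /lambda2 !powR_expR // mul1r => hdn hTn hlam0.
apply: (drop_prob_le_expR mut (f n) (d n) (T n) F s eps `|C| (lambda1 n)) => //.
- move=> x /(hard n nh) /le_trans; apply; rewrite powR_expR // mulNr.
  by apply: ler_wpM2r; [exact: expR_ge0 | exact: ler_norm].
- by have := ler_wpM2l (ltW c0) lc; rewrite mulfV ?gt_eqF.
apply: HM => //.
by rewrite -[_ * _]expRK ler_ln ?posrE ?expR_gt0 ?natr1 // addr_gt0.
Qed.
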